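(* Let $m,n\ge1$ and $Z\subset[1,m]\times[1,n]$. Let $R=\mathbb{C}[x_{ij}:(i,j)\in([1,m]\times[1,n])\setminus Z]$ and let $X$ be the $m\times n$ matrix whose $(i,j)$-entry is $x_{ij}$ if $(i,j)\notin Z$ and $0$ if $(i,j)\in Z$. Let $\mathcal{G}_2(Z)\subset R$ be the set of $2\times2$ minors of $X$, and $I_2(Z)$ the ideal they generate. Then for every total order on the variables of $R$, $\mathcal{G}_2(Z)$ is a Gröbner basis of $I_2(Z)$ with respect to the degree reverse lexicographic order induced by that total order.
   Context: Degree revlex order (for variables ordered $x_1>\dots>x_N$): $x^a>x^b$ if $\sum a_i>\sum b_i$, or the degrees are equal and the rightmost nonzero entry of $a-b$ is negative. A finite generating set $G$ of $I$ is a Gröbner basis if the initial ideal of $I$ is generated by the initial monomials of elements of $G$. *)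

From HB Require Import structures.
From mathcomp Require Import all_boot all_algebra.
From mathcomp Require Import Rstruct complex.
From mathcomp Require Import mpoly.
From Stdlib Require Rdefinitions.

Set Implicit Arguments.
Unset Strict Implicit.
Unset Printing Implicit Defensive.

Import GRing.Theory.
Local Open Scope ring_scope.

Definition CC : fieldType := complex.complex Rdefinitions.R.

(* Variables of R = C[x_ij : (i,j) not in Z] are indexed by 'I_(nvars Z):
   the k-th variable is x_p where p is the k-th element of the complement of Z. *)
Definition nvars (m n : nat) (Z : {set 'I_m * 'I_n}) : nat := #|~: Z|.

Definition Rpoly (m n : nat) (Z : {set 'I_m * 'I_n}) := {mpoly CC[nvars Z]}.

Definition Xentry (m n : nat) (Z : {set 'I_m * 'I_n}) (i : 'I_m) (j : 'I_n)
  : Rpoly Z :=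
  if (i, j) \in Z then 0
  else match (insub (index (i, j) (enum (~: Z))) : option 'I_(nvars Z)) with
       | Some k => 'X_k
       | None => 0
       end.

Definition minors2 (m n : nat) (Z : {set 'I_m * 'I_n}) (f : Rpoly Z) : Prop :=
  exists (i1 i2 : 'I_m) (j1 j2 : 'I_n),
    (i1 < i2)%N /\ (j1 < j2)%N /\
    f = Xentry Z i1 j1 * Xentry Z i2 j2 - Xentry Z i1 j2 * Xentry Z i2 j1.

Definition ideal_gen (N : nat) (S : {mpoly CC[N]} -> Prop) (f : {mpoly CC[N]})
  : Prop :=
  exists s : seq ({mpoly CC[N]} * {mpoly CC[N]}),
    (forall c, c \in s -> S c.2) /\ f = \sum_(c <- s) c.1 * c.2.

Definition strict_total (N : nat) (lt : rel 'I_N) : Prop :=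
  [/\ forall v, ~~ lt v v,
      forall u v w, lt u v -> lt v w -> lt u w
    & forall v w, v != w -> lt v w || lt w v].

(* Degree revlex order induced by lt: [degrevlex lt a b] means x^a > x^b:
   deg a > deg b, or the degrees are equal and the "rightmost" (i.e. smallest
   for lt) variable v at which a and b differ has a v < b v. *)
Definition degrevlex (N : nat) (lt : rel 'I_N) (a b : 'X_{1..N}) : Prop :=
  (mdeg b < mdeg a)%N \/
  (mdeg a = mdeg b /\
   exists v : 'I_N, (a v < b v)%N /\ (forall w, lt w v -> a w = b w)).

Definition is_initial (N : nat) (gt : 'X_{1..N} -> 'X_{1..N} -> Prop)
  (f : {mpoly CC[N]}) (mon : 'X_{1..N}) : Prop :=
  mon \in msupp f /\ (forall m', m' \in msupp f -> m' != mon -> gt mon m').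

Definition initial_monomials (N : nat) (gt : 'X_{1..N} -> 'X_{1..N} -> Prop)
  (S : {mpoly CC[N]} -> Prop) (g : {mpoly CC[N]}) : Prop :=
  exists f mon, S f /\ is_initial gt f mon /\ g = 'X_[mon].

Definition initial_ideal (N : nat) (gt : 'X_{1..N} -> 'X_{1..N} -> Prop)
  (I : {mpoly CC[N]} -> Prop) : {mpoly CC[N]} -> Prop :=
  ideal_gen (initial_monomials gt I).

Definition is_groebner (N : nat) (gt : 'X_{1..N} -> 'X_{1..N} -> Prop)
  (G I : {mpoly CC[N]} -> Prop) : Prop :=
  forall h, initial_ideal gt I h <-> ideal_gen (initial_monomials gt G) h.

Arguments Xentry {m n} Z i j.
Arguments minors2 {m n} Z f.
Arguments nvars {m n} Z.

(* Call x^mon standard if no initial monomial of a 2x2 minor divides it.  For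
   such mon, any two variables x_a, x_b of x^mon in different rows and columns
   have both cross cells outside Z, and the smallest of x_a, x_b and the two
   cross variables is x_a or x_b.  Hence every row and every column used by
   x^mon meet outside Z, and x^mon is the degrevlex-smallest monomial with its
   row and column sums (its margins).
   Let phi be the linear form summing the coefficients of all monomials with
   the margins of mon.  A multiple x^u g of a minor g is either a difference of
   two monomials with equal margins, or, when one term of g vanishes because a
   cell lies in Z, a single monomial whose rows and columns meet in that cell,
   so its margins are not those of mon.  Thus phi vanishes on I_2(Z).  But if
   mon were the initial monomial of f, every other monomial with its margins
   would be larger, so phi f would be the leading coefficient of f. *)

From HB Require Import structures.
From mathcomp Require Import all_boot all_algebra.
From mathcomp Require Import Rstruct complex.
From mathcomp Require Import mpoly.
From mathcomp Require Import zify.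
From Stdlib Require Import Classical.

Set Implicit Arguments.
Unset Strict Implicit.
Unset Printing Implicit Defensive.
Import GRing.Theory.
Local Open Scope ring_scope.

Section Groebner.
Variable N : nat.
Implicit Types (S T : {mpoly CC[N]} -> Prop) (f g h : {mpoly CC[N]}).
Implicit Types (A B mon : 'X_{1..N}) (gt : 'X_{1..N} -> 'X_{1..N} -> Prop).

Lemma ideal_gen_mem S f : S f -> ideal_gen S f.
Proof.
by move=> Sf; exists [:: (1, f)]; split=> [c /[!inE] /eqP -> //|]; rewrite big_seq1 mul1r.
Qed.

Lemma ideal_gen_sub S T h : (forall f, S f -> T f) -> ideal_gen S h -> ideal_gen T h.
Proof. by move=> ST [s [Ss ->]]; exists s; split=> // c /Ss /ST. Qed.

Lemma ideal_gen_sum S (s : seq ({mpoly CC[N]} * {mpoly CC[N]})) :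
  (forall c, c \in s -> ideal_gen S c.2) -> ideal_gen S (\sum_(c <- s) c.1 * c.2).
Proof.
elim: s => [|c s IHs] Is; first by exists [::]; rewrite !big_nil.
rewrite big_cons; have [t [St ->]] := Is c (mem_head _ _).
have [t' [St' ->]] : ideal_gen S (\sum_(d <- s) d.1 * d.2).
  by apply: IHs => d sd; apply: Is; rewrite inE sd orbT.
exists ([seq (c.1 * d.1, d.2) | d <- t] ++ t'); split.
  by move=> d; rewrite mem_cat => /orP[/mapP[d' /St ? ->]|/St'].
rewrite big_cat big_map big_distrr /=; congr (_ + _).
by apply: eq_bigr => d _; rewrite mulrA.
Qed.

Lemma is_groebner_dvd gt G :
  (forall f mon, ideal_gen G f -> is_initial gt f mon ->
     exists g mg, [/\ G g, is_initial gt g mg & (mg <= mon)%MM]) ->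
  is_groebner gt G (ideal_gen G).
Proof.
move=> dvdG h; split; last first.
  apply: ideal_gen_sub => _ [g [mg [Gg [inig ->]]]].
  by exists g, mg; do !split=> //; apply: ideal_gen_mem.
case=> s [Is ->]; apply: ideal_gen_sum => c /Is[f [mon [If [inif ->]]]].
have [g [mg [Gg inig le_mg]]] := dvdG f mon If inif.
exists [:: ('X_[mon - mg], 'X_[mg])]; split=> [d /[!inE] /eqP -> | ]; first by exists g, mg.
by rewrite big_seq1 -mpolyXD submK.
Qed.

Lemma is_initialN gt f mon : is_initial gt f mon -> is_initial gt (- f) mon.
Proof.
have eq_supp : msupp (- f) =i msupp f by apply: perm_mem; apply: msuppN.
by case=> f_mon max_mon; split=> [|m']; rewrite eq_supp //; apply: max_mon.
Qed.

Lemma is_initialX gt A : is_initial gt 'X_[A] A.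
Proof.
by rewrite /is_initial msuppX; split=> [|m']; rewrite mem_seq1 // => /eqP ->; rewrite eqxx.
Qed.

Lemma is_initialXB gt A B : A != B -> gt A B -> is_initial gt ('X_[A] - 'X_[B]) A.
Proof.
move=> neAB gtAB; split=> [|m']; rewrite mcoeff_msupp mcoeffB !mcoeffX.
  by rewrite eqxx (eq_sym B) (negbTE neAB) subr0 oner_neq0.
move=> + neA; rewrite (eq_sym A) (negbTE neA) sub0r oppr_eq0.
by have [->|] := eqVneq m' B; rewrite ?eqxx.
Qed.

End Groebner.

Section Degrevlex.
Variables (N : nat) (lt : rel 'I_N).
Hypothesis lt_total : strict_total lt.

Definition rank (v : 'I_N) : nat := #|[set w | lt w v]|.

Lemma lt_rank v w : lt v w = (rank v < rank w)%N.
Proof.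
have [irr trans tot] := lt_total.
have rank_lt x y : lt x y -> (rank x < rank y)%N.
  move=> lt_xy; apply/proper_card/properP; split.
    by apply/subsetP => z; rewrite !inE => /trans; apply.
  by exists x; rewrite !inE ?lt_xy ?(negbTE (irr x)).
apply/idP/idP => [/rank_lt//|lt_rvw].
have [eq_vw|/tot/orP[//|/rank_lt]] := eqVneq v w; first by rewrite eq_vw ltnn in lt_rvw.
by rewrite ltnNge (ltnW lt_rvw).
Qed.

Lemma rank_inj : injective rank.
Proof.
have [_ _ tot] := lt_total.
by move=> v w eq_r; apply/eqP; apply: contraT => /tot; rewrite !lt_rank eq_r ltnn.
Qed.

Lemma degrevlex_asym A B : degrevlex lt A B -> ~ degrevlex lt B A.
Proof.
have [_ _ tot] := lt_total.
move=> [ltBA|[eqAB [v [ltv eqv]]]] [ltAB|[eqBA [w [ltw eqw]]]]; try lia.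
have [eq_vw|/tot/orP[/eqw|/eqv] e] := eqVneq v w; first by rewrite eq_vw in ltv; lia.
  by rewrite e in ltv; lia.
by rewrite e in ltw; lia.
Qed.

Lemma degrevlex_irr A : ~ degrevlex lt A A.
Proof. by move=> gtAA; apply: degrevlex_asym (gtAA) gtAA. Qed.

Lemma degrevlexN_quadratic (a b c d : 'I_N) :
  [&& c != a, c != b, d != a & d != b] ->
  ~ degrevlex lt (U_(a) + U_(b))%MM (U_(c) + U_(d))%MM ->
  (lt a c && lt a d) || (lt b c && lt b d).
Proof.
move=> /and4P[ca cb da db] not_gt; apply/negP => not_min; apply: not_gt.
right; split; first by rewrite !mdegD !mdeg1.
have [u [u_cd le_uc le_ud]] : exists u,
    [/\ (c == u) || (d == u), (rank u <= rank c)%N & (rank u <= rank d)%N].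
  by case: (leqP (rank c) (rank d)) => ?; [exists c | exists d];
    rewrite eqxx ?orbT; split=> //; lia.
have [ua ub] : u != a /\ u != b by case/orP: u_cd => /eqP <-.
rewrite !lt_rank in not_min.
have [lt_ua lt_ub] : (rank u < rank a)%N /\ (rank u < rank b)%N.
  by move: ua ub; rewrite -!(inj_eq rank_inj); lia.
exists u; split.
  rewrite !mnmDE !mnm1E; move: u_cd; rewrite -!(inj_eq rank_inj); lia.
move=> w; rewrite lt_rank => lt_wu; rewrite !mnmDE !mnm1E.
by rewrite -!(inj_eq rank_inj); lia.
Qed.

End Degrevlex.

Lemma sumn_gt0_witness (I : finType) (P : pred I) (F : I -> nat) :
  (0 < \sum_(i | P i) F i)%N -> exists2 i, P i & (0 < F i)%N.
Proof. by rewrite lt0n sum_nat_eq0 => /forall_inPn[i Pi]; rewrite -lt0n; exists i. Qed.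

Lemma sumn_eq_compensated (I : finType) (P : pred I) (F G : I -> nat) v :
  (\sum_(i | P i) F i = \sum_(i | P i) G i)%N -> P v -> (G v < F v)%N ->
  exists i, [/\ P i, i != v & (F i < G i)%N].
Proof.
move=> eqFG Pv ltGF.
case: (pickP [pred i | [&& P i, i != v & (F i < G i)%N]]) => [i /and3P[]|none].
  by exists i.
have le_rest : (\sum_(i | P i && (i != v)) G i <= \sum_(i | P i && (i != v)) F i)%N.
  apply: leq_sum => i /andP[Pi ne_iv]; rewrite leqNgt.
  by move: (none i) => /=; rewrite Pi ne_iv /= => ->.
by move: eqFG; rewrite (bigD1 v Pv) [RHS](bigD1 v Pv) /=; lia.
Qed.

Section GenericMatrix.
Variables (m n : nat) (Z : {set 'I_m * 'I_n}).
Local Notation N := (nvars Z).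
Local Notation P := {mpoly CC[N]}.
Local Notation E := (Xentry Z).
Implicit Types (M : 'X_{1..N}) (k l : 'I_N).

Definition cell (k : 'I_N) : 'I_m * 'I_n := enum_val k.
Definition row_of (k : 'I_N) : 'I_m := (cell k).1.
Definition col_of (k : 'I_N) : 'I_n := (cell k).2.

Lemma cell_notZ k : cell k \notin Z.
Proof. by have := enum_valP k; rewrite inE. Qed.

Lemma cell_onto p : p \notin Z -> exists k, cell k = p.
Proof.
move=> pZ; have pA : p \in ~: Z by rewrite inE.
by exists (enum_rank_in pA p); apply: enum_rankK_in.
Qed.

Lemma cell_eq k l : row_of k = row_of l -> col_of k = col_of l -> k = l.
Proof.
move=> eq_r eq_c; apply: enum_val_inj.
by rewrite [enum_val k]surjective_pairing [enum_val l]surjective_pairing; congr pair.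
Qed.

Lemma Xentry_cell k : E (row_of k) (col_of k) = 'X_k.
Proof.
rewrite /Xentry /row_of /col_of -surjective_pairing (negbTE (cell_notZ k)).
by rewrite /cell (enum_val_nth (cell k)) index_uniq ?enum_uniq -?cardE // valK.
Qed.

Variant Xentry_mul_spec (p q : 'I_m * 'I_n) : P -> Prop :=
  | XentryMulZ of (p \in Z) || (q \in Z) : Xentry_mul_spec p q 0
  | XentryMulX k l of cell k = p & cell l = q : Xentry_mul_spec p q ('X_k * 'X_l).

Lemma Xentry_mulP p q : Xentry_mul_spec p q (E p.1 p.2 * E q.1 q.2).
Proof.
have [pZ|/cell_onto[k <-]] := boolP (p \in Z).
  by rewrite /Xentry -surjective_pairing pZ mul0r; constructor; rewrite pZ.
have [qZ|/cell_onto[l <-]] := boolP (q \in Z).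
  by rewrite [E q.1 q.2]/Xentry -surjective_pairing qZ mulr0; constructor; rewrite qZ orbT.
by rewrite !Xentry_cell; constructor.
Qed.

Definition cross_minor (a b : 'I_N) : P :=
  'X_a * 'X_b - E (row_of a) (col_of b) * E (row_of b) (col_of a).

Lemma minors2_cross a b : row_of a != row_of b -> col_of a != col_of b ->
  exists2 g, minors2 Z g & g = cross_minor a b \/ g = - cross_minor a b.
Proof.
wlog lt_r : a b / (row_of a < row_of b)%N => [hwlog ne_r ne_c|_ ne_c].
  have [lt_r|lt_r|/val_inj eq_r] := ltngtP (row_of a) (row_of b);
    [exact: hwlog| |by rewrite eq_r eqxx in ne_r].
  have -> : cross_minor a b = cross_minor b a by rewrite /cross_minor; congr (_ - _); apply: mulrC.
  by apply: hwlog; rewrite // eq_sym.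
have [lt_c|lt_c|/val_inj eq_c] := ltngtP (col_of a) (col_of b); last first.
- by rewrite eq_c eqxx in ne_c.
- exists (E (row_of a) (col_of b) * E (row_of b) (col_of a)
        - E (row_of a) (col_of a) * E (row_of b) (col_of b)).
    by exists (row_of a), (row_of b), (col_of b), (col_of a).
  by right; rewrite !Xentry_cell opprB.
- exists (E (row_of a) (col_of a) * E (row_of b) (col_of b)
        - E (row_of a) (col_of b) * E (row_of b) (col_of a)).
    by exists (row_of a), (row_of b), (col_of a), (col_of b).
  by left; rewrite !Xentry_cell.
Qed.

Definition row_sum (M : 'X_{1..N}) (i : 'I_m) : nat := (\sum_(k | row_of k == i) M k)%N.
Definition col_sum (M : 'X_{1..N}) (j : 'I_n) : nat := (\sum_(k | col_of k == j) M k)%N.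

Definition same_margins (M M' : 'X_{1..N}) : bool :=
  [forall i, row_sum M i == row_sum M' i] && [forall j, col_sum M j == col_sum M' j].

Lemma same_marginsxx M : same_margins M M.
Proof. by apply/andP; split; apply/forallP => ?. Qed.

Lemma eq_same_margins M M' M'' :
    (forall i, row_sum M i = row_sum M' i) -> (forall j, col_sum M j = col_sum M' j) ->
  same_margins M M'' = same_margins M' M''.
Proof. by move=> eq_r eq_c; congr andb; apply: eq_forallb => x; rewrite ?eq_r ?eq_c. Qed.

Lemma mdeg_row_sum M : mdeg M = (\sum_i row_sum M i)%N.
Proof. by rewrite mdegE (partition_big row_of xpredT). Qed.

Lemma same_margins_mdeg M M' : same_margins M M' -> mdeg M = mdeg M'.
Proof.
by case/andP => /forallP eq_r _; rewrite !mdeg_row_sum; apply: eq_bigr => i _; apply/eqP.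
Qed.

Lemma row_sumD M M' i : row_sum (M + M') i = (row_sum M i + row_sum M' i)%N.
Proof. by rewrite /row_sum -big_split; apply: eq_bigr => k _; rewrite mnmDE. Qed.

Lemma col_sumD M M' j : col_sum (M + M') j = (col_sum M j + col_sum M' j)%N.
Proof. by rewrite /col_sum -big_split; apply: eq_bigr => k _; rewrite mnmDE. Qed.

Lemma row_sum1 k i : row_sum U_(k) i = (row_of k == i).
Proof.
rewrite /row_sum big_mkcond (bigD1 k) //= mnm1E eqxx big1 ?addn0 => [|l ne_lk].
  by case: ifP.
by case: ifP => // _; rewrite mnm1E eq_sym (negbTE ne_lk).
Qed.

Lemma col_sum1 k j : col_sum U_(k) j = (col_of k == j).
Proof.
rewrite /col_sum big_mkcond (bigD1 k) //= mnm1E eqxx big1 ?addn0 => [|l ne_lk].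
  by case: ifP.
by case: ifP => // _; rewrite mnm1E eq_sym (negbTE ne_lk).
Qed.

Lemma row_sum_ge M k : (M k <= row_sum M (row_of k))%N.
Proof. by rewrite /row_sum (bigD1 k) //= leq_addr. Qed.

Lemma col_sum_ge M k : (M k <= col_sum M (col_of k))%N.
Proof. by rewrite /col_sum (bigD1 k) //= leq_addr. Qed.

Variable lt : rel 'I_N.
Hypothesis lt_total : strict_total lt.
Local Notation gt := (degrevlex lt).

(* The smallest of the four variables divides x_a x_b, so x_a x_b is not the
   initial term of the minor with corners a and b. *)
Definition standard_pair a b : Prop :=
  exists c d, [/\ cell c = (row_of a, col_of b), cell d = (row_of b, col_of a)
                & (lt a c && lt a d) || (lt b c && lt b d)].

Definition standard M : Prop :=
  forall a b, (0 < M a)%N -> (0 < M b)%N ->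
    row_of a != row_of b -> col_of a != col_of b -> standard_pair a b.

Lemma standard_of_indivisible mon :
  (forall g mg, minors2 Z g -> is_initial gt g mg -> ~ (mg <= mon)%MM) -> standard mon.
Proof.
move=> indiv a b mon_a mon_b ne_r ne_c.
have [g Gg g_cross] := minors2_cross ne_r ne_c.
have not_init A : is_initial gt (cross_minor a b) A -> ~ (A <= mon)%MM.
  by move=> iniA; apply: indiv Gg _; case: g_cross => ->; last apply: is_initialN.
have ab_mon : (U_(a) + U_(b) <= mon)%MM.
  have ne_ab : a != b by apply: contraNneq ne_r => ->.
  apply/mnm_lepP => k; rewrite mnmDE !mnm1E.
  by have [<-|_] := eqVneq a k; [rewrite (eq_sym b) (negbTE ne_ab) | have [<-|] := eqVneq b k].
rewrite /cross_minor -mpolyXD in not_init.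
case: (Xentry_mulP (row_of a, col_of b) (row_of b, col_of a)) not_init
  => [_|c d c_ab d_ba] not_init.
  by case: (not_init _ _ ab_mon); rewrite subr0; apply: is_initialX.
have [[rc cc] [rd cd]] : (row_of c = row_of a /\ col_of c = col_of b)
    /\ (row_of d = row_of b /\ col_of d = col_of a) by rewrite /row_of /col_of c_ab d_ba.
exists c, d; split=> //; apply: (degrevlexN_quadratic lt_total).
  apply/and4P; split.
  - by apply: contraNneq ne_c => <-; rewrite cc.
  - by apply: contraNneq ne_r => <-; rewrite rc.
  - by apply: contraNneq ne_r => <-; rewrite rd.
  - by apply: contraNneq ne_c => <-; rewrite cd.
move=> gt_ab; apply: (not_init _ _ ab_mon); rewrite -mpolyXD.
apply: is_initialXB (gt_ab); apply: contraPneq gt_ab => ->.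
exact: degrevlex_irr.
Qed.

Lemma standard_margin_cell mon i j : standard mon ->
  (0 < row_sum mon i)%N -> (0 < col_sum mon j)%N -> (i, j) \notin Z.
Proof.
move=> std /sumn_gt0_witness[a /eqP ra mon_a] /sumn_gt0_witness[b /eqP cb mon_b].
have [ca|ne_c] := eqVneq (col_of a) j.
  by rewrite -ra -ca /row_of /col_of -surjective_pairing cell_notZ.
have [rb|ne_r] := eqVneq (row_of b) i.
  by rewrite -rb -cb /row_of /col_of -surjective_pairing cell_notZ.
have ne_ab : row_of a != row_of b by rewrite ra eq_sym.
have [c [d [c_ab _ _]]] := std a b mon_a mon_b ne_ab ltac:(by rewrite cb).
by rewrite -ra -cb -c_ab cell_notZ.
Qed.

Lemma standard_min_margin mon M :
  standard mon -> same_margins M mon -> M != mon -> gt M mon.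
Proof.
move=> std sM neM; right; split; first exact: same_margins_mdeg.
have [w0 ne_w0] : exists w, M w != mon w.
  apply/existsP; apply: contraNT neM => /existsPn eqM.
  by apply/eqP/mnmP => w; apply/eqP/negPn/eqM.
have [v ne_v min_v] := @arg_minnP _ w0 (fun w => M w != mon w) (rank lt) ne_w0.
have eq_below w : lt w v -> M w = mon w.
  rewrite (lt_rank lt_total) => lt_wv; apply/eqP.
  by apply: contraTT lt_wv => /min_v; rewrite leqNgt.
(* If M v > mon v, the row and the column of v each contain a variable of mon
   not below v; the standard pair they form has v as a cross cell. *)
exists v; split=> //; rewrite ltn_neqAle ne_v leqNgt /=; apply/negP => lt_mon_M.
case/andP: sM => /forallP/(_ (row_of v))/eqP eq_r /forallP/(_ (col_of v))/eqP eq_c.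
have [a [/eqP ra ne_av lt_a]] := sumn_eq_compensated eq_r (eqxx _) lt_mon_M.
have [b [/eqP cb ne_bv lt_b]] := sumn_eq_compensated eq_c (eqxx _) lt_mon_M.
have above x : (M x < mon x)%N -> ~~ lt x v by apply: contraTN => /eq_below ->; rewrite ltnn.
have ne_r : row_of a != row_of b.
  by rewrite ra; apply: contra_neq ne_bv => rb; apply: cell_eq.
have ne_c : col_of a != col_of b.
  by rewrite cb; apply: contra_neq ne_av => ca; apply: cell_eq.
have pos x : (M x < mon x)%N -> (0 < mon x)%N by move=> /(leq_ltn_trans (leq0n _)).
have [c [d [c_ab _]]] := std a b (pos _ lt_a) (pos _ lt_b) ne_r ne_c.
have -> : c = v by apply: cell_eq; rewrite /row_of /col_of c_ab.
by rewrite (negbTE (above _ lt_a)) (negbTE (above _ lt_b)).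
Qed.

Section MarginForm.
Variable mon : 'X_{1..N}.

(* Monomials with the margins of mon have its degree, so the bound on the
   index type loses none of them. *)
Definition margin_form (p : P) : CC :=
  \sum_(M : 'X_{1..N < (mdeg mon).+1} | same_margins M mon) p@_M.

Fact margin_form_is_linear : linear margin_form.
Proof.
move=> c p q; rewrite /margin_form scaler_sumr -big_split.
by apply: eq_bigr => M _; rewrite mcoeffD mcoeffZ.
Qed.

HB.instance Definition _ :=
  GRing.isLinear.Build CC P CC *%R margin_form margin_form_is_linear.

Lemma margin_formX M : margin_form 'X_[M] = (same_margins M mon)%:R.
Proof.
have [sM|nsM] := boolP (same_margins M mon); last first.
  rewrite /margin_form big1 // => M' sM'.
  by rewrite mcoeffX; case: eqP => // eM; rewrite eM sM' in nsM.
have bM : (mdeg M < (mdeg mon).+1)%N by rewrite (same_margins_mdeg sM).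
rewrite /margin_form (bigD1 (BMultinom bM)) //= mcoeffX eqxx big1 ?addr0 // => M' /andP[_ neM'].
by rewrite mcoeffX; case: eqP => // eM; case/eqP: neM'; apply: val_inj.
Qed.

Hypothesis mon_std : standard mon.

Lemma same_margins_cross u k l : same_margins (u + (U_(k) + U_(l))) mon ->
  (row_of k, col_of l) \notin Z.
Proof.
case/andP => /forallP eq_r /forallP eq_c; apply: (standard_margin_cell mon_std).
  rewrite -(eqP (eq_r _)); apply: leq_trans (row_sum_ge _ k).
  by rewrite !mnmDE mnm1E eqxx; lia.
rewrite -(eqP (eq_c _)); apply: leq_trans (col_sum_ge _ l).
by rewrite !mnmDE (mnm1E l) eqxx; lia.
Qed.

Lemma margin_form_minor u i1 i2 j1 j2 :
  margin_form ('X_[u] * (E i1 j1 * E i2 j2 - E i1 j2 * E i2 j1)) = 0.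
Proof.
have formXX k l :
    margin_form ('X_[u] * ('X_k * 'X_l)) = (same_margins (u + (U_(k) + U_(l))) mon)%:R.
  by rewrite -!mpolyXD margin_formX.
rewrite mulrBr linearB /=.
case: (Xentry_mulP (i1, j1) (i2, j2)) => [Z11_22|k1 k2 c1 c2];
  case: (Xentry_mulP (i1, j2) (i2, j1)) => [Z12_21|k3 k4 c3 c4].
- by rewrite mulr0 linear0 subrr.
- rewrite mulr0 linear0 formXX; case sM: same_margins; last by rewrite subrr.
  have Z11 := same_margins_cross sM; rewrite [(U_(k3) + _)%MM]addmC in sM.
  have Z22 := same_margins_cross sM.
  by move: Z11_22 Z11 Z22; rewrite /row_of /col_of c3 c4 /= => /orP[] ->.
- rewrite mulr0 linear0 formXX; case sM: same_margins; last by rewrite subr0.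
  have Z12 := same_margins_cross sM; rewrite [(U_(k1) + _)%MM]addmC in sM.
  have Z21 := same_margins_cross sM.
  by move: Z12_21 Z12 Z21; rewrite /row_of /col_of c1 c2 /= => /orP[] ->.
rewrite !formXX (@eq_same_margins (u + (U_(k1) + U_(k2))) (u + (U_(k3) + U_(k4)))) ?subrr //.
  by move=> i; rewrite !row_sumD !row_sum1 /row_of c1 c2 c3 c4.
by move=> j; rewrite !col_sumD !col_sum1 /col_of c1 c2 c3 c4 /=; lia.
Qed.

Lemma margin_form_ideal f : ideal_gen (minors2 Z) f -> margin_form f = 0.
Proof.
case=> s [Gs ->]; rewrite raddf_sum big_seq big1 // => c.
move=> /Gs[i1 [i2 [j1 [j2 [_ [_ ->]]]]]].
rewrite [c.1]mpolyE mulr_suml raddf_sum big1 // => u _.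
by rewrite -scalerAl /= linearZ /= margin_form_minor mulr0.
Qed.

Lemma margin_form_initial f : is_initial gt f mon -> margin_form f = f@_mon.
Proof.
case=> _ max_mon; have bmon : (mdeg mon < (mdeg mon).+1)%N by [].
rewrite /margin_form (bigD1 (BMultinom bmon)) ?same_marginsxx //= big1 ?addr0 //.
move=> M /andP[sM neM]; have neM' : (M : 'X_{1..N}) != mon.
  by apply: contraNneq neM => eM; apply/eqP/val_inj.
have [M_f|] := boolP ((M : 'X_{1..N}) \in msupp f); last by rewrite mcoeff_msupp negbK => /eqP.
by case: (degrevlex_asym lt_total (max_mon _ M_f neM')); apply: standard_min_margin.
Qed.

End MarginForm.

Lemma standard_not_initial mon f :
  standard mon -> ideal_gen (minors2 Z) f -> ~ is_initial gt f mon.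
Proof.
move=> std If inif; have := margin_form_ideal std If.
by rewrite (margin_form_initial std inif) => /eqP; case: inif; rewrite mcoeff_msupp => /negP.
Qed.

Lemma minors2_initial_dvd f mon : ideal_gen (minors2 Z) f -> is_initial gt f mon ->
  exists g mg, [/\ minors2 Z g, is_initial gt g mg & (mg <= mon)%MM].
Proof.
move=> If inif; apply: NNPP => none; apply: standard_not_initial If inif.
by apply: standard_of_indivisible => g mg Gg inig le_mg; apply: none; exists g, mg.
Qed.

End GenericMatrix.

Theorem theorem5p5 (m n : nat) (hm : (0 < m)%N) (hn : (0 < n)%N)
  (Z : {set 'I_m * 'I_n}) (lt : rel 'I_(nvars Z)) :
  strict_total lt ->
  is_groebner (degrevlex lt) (minors2 Z) (ideal_gen (minors2 Z)).
Proof. by move=> lt_total; apply: is_groebner_dvd => f mon; apply: minors2_initial_dvd. Qed.
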